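(* Let $B\in\mathbb{R}^{n\times n}$ be a nonsingular $M$-matrix and $C\in\mathbb{R}^{n\times n}$ an $M$-matrix such that $B^{-1}C\ge 0$ (entrywise), and suppose that $B-C-I$ is a nonsingular $M$-matrix. Then $\rho(X)\neq 1$ for every entrywise nonpositive solution $X\in\mathbb{R}^{n\times n}$ of the quadratic matrix equation $X^2+BX+C=0$.
   Context: $\rho(\cdot)$ denotes spectral radius. Inequalities between matrices are entrywise; a matrix $X$ is nonpositive if $-X\ge 0$ entrywise. A $Z$-matrix is a real square matrix with nonpositive off-diagonal entries; a $Z$-matrix $A=sI-N$ with $N\ge 0$ is an $M$-matrix if $s\ge\rho(N)$ and a nonsingular $M$-matrix if $s>\rho(N)$. *)

From HB Require Import structures.
From mathcomp Require Import all_boot all_order all_algebra.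
From mathcomp Require Import complex.
From mathcomp Require Import reals.
Set Implicit Arguments. Unset Strict Implicit. Unset Printing Implicit Defensive.
Import Order.TTheory GRing.Theory Num.Theory.
Local Open Scope ring_scope.

(* Spectral radius of a real square matrix A (R a real closed field, e.g. the reals):
   the characteristic polynomial of A, viewed over the algebraically closed
   field R[i], splits as  lead_coef * \prod_(z <- eig) ('X - z);
   rho(A) = max_{z in eig} |z|  (0 when n = 0). *)
Definition eigenvalues_C (R : rcfType) (n : nat) (A : 'M[R]_n) : seq R[i] :=
  sval (closed_field_poly_normal (char_poly (map_mx (fun x : R => x%:C%C) A))).

Definition spectral_radius (R : rcfType) (n : nat) (A : 'M[R]_n) : R :=
  complex.Re (\big[Num.max/0]_(z <- eigenvalues_C A) `|z|).

Definition nonneg_mx (R : realDomainType) (m n : nat) (A : 'M[R]_(m, n)) : Prop :=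
  forall i j, 0 <= A i j.

Definition Z_matrix (R : realDomainType) (n : nat) (A : 'M[R]_n) : Prop :=
  forall i j, i != j -> A i j <= 0.

Definition M_matrix (R : rcfType) (n : nat) (A : 'M[R]_n) : Prop :=
  Z_matrix A /\
  exists (s : R) (N : 'M[R]_n),
    nonneg_mx N /\ A = s%:M - N /\ spectral_radius N <= s.

Definition nonsingular_M_matrix (R : rcfType) (n : nat) (A : 'M[R]_n) : Prop :=
  Z_matrix A /\
  exists (s : R) (N : 'M[R]_n),
    nonneg_mx N /\ A = s%:M - N /\ spectral_radius N < s.

From HB Require Import structures.
From mathcomp Require Import all_boot all_order all_algebra.
From mathcomp Require Import complex.
From mathcomp Require Import reals.
From mathcomp Require Import polyrcf ring.
Set Implicit Arguments.
Unset Strict Implicit.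
Unset Printing Implicit Defensive.

Import Order.TTheory GRing.Theory Num.Theory.
Local Open Scope ring_scope.

(** Suppose rho(X) = 1 and pick a complex eigenvalue z of X with |z| = 1 and an
    eigenvector v.  Since -X >= 0, the vector u = |v| satisfies (-X) u >= u.  For a
    nonnegative matrix N this forces a real eigenvalue mu >= 1 of N: otherwise
    I - N would be monotone ((I - N) x >= 0 implies x >= 0), which is proved by
    induction on the dimension through the Schur complement of the leading entry,
    and (I - N)(-u) = N u - u >= 0 would give -u >= 0, i.e. u = 0.  Then -mu is
    an eigenvalue of X, so mu <= rho(X) = 1, i.e. X w = -w for some w <> 0.  Substituting in
    X^2 + B X + C = 0 yields (B - C - I) w = 0, impossible for the nonsingular
    M-matrix B - C - I = s I - M, since s > rho(M) cannot be an eigenvalue of M. *)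

Section RealClosedPolynomials.
Variable R : rcfType.
Implicit Types (p q : {poly R}) (x t : R).

Definition roots_lt p t := forall s, t <= s -> ~~ root p s.

Lemma monic_root_ge p x : p \is monic -> p.[x] <= 0 -> exists2 y, x <= y & root p y.
Proof.
move=> p_monic px_le0.
have lc_gt0 : 0 < lead_coef p by rewrite (monicP p_monic) ltr01.
have [z pz_ge] := poly_pinfty_gt_lc lc_gt0.
have x_le_max : x <= Num.max x z by rewrite le_max lexx.
have pb_ge0 : 0 <= p.[Num.max x z].
  by apply: le_trans (ltW lc_gt0) (pz_ge _ _); rewrite le_max lexx orbT.
have [|y /andP[x_le_y _] py] := @poly_ivt _ p _ _ x_le_max; first by rewrite px_le0.
by exists y.
Qed.

Lemma monic_roots_lt_gt0 p t : p \is monic -> roots_lt p t -> 0 < p.[t].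
Proof.
move=> p_monic p_roots; rewrite ltNge; apply/negP => /(monic_root_ge p_monic)[y t_le_y].
by apply/negP; exact: p_roots.
Qed.

Lemma horner_le0_right q x : (forall y, x < y -> q.[y] <= 0) -> q.[x] <= 0.
Proof.
move=> q_le0; rewrite leNgt; apply/negP => qx_gt0.
have [d d_gt0 near_x] := poly_cont x q qx_gt0.
have x_lt_y : x < x + d / 2 by rewrite ltrDl divr_gt0.
have : `|x + d / 2 - x| < d.
  by rewrite addrAC subrr add0r gtr0_norm ?divr_gt0 // ltr_pdivrMr // ltr_pMr // ltr1n.
move/near_x; rewrite ltr_norml => /andP[+ _].
by rewrite ltrBrDl subrr ltNge q_le0.
Qed.

Lemma mem_rootsR p x : p != 0 -> (x \in rootsR p) = root p x.
Proof. by move=> p_neq0; rewrite -(roots_on_rootsR p_neq0) in_itv. Qed.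

Lemma max_root p x : p != 0 -> root p x ->
  exists s, [/\ x <= s, root p s & forall y, s < y -> ~~ root p y].
Proof.
move=> p_neq0 px; exists (\big[Num.max/x]_(y <- rootsR p) y); split.
- exact: bigmax_ge_id.
- rewrite big_seq; elim/big_ind: _ => // [y z py pz|y]; last by rewrite mem_rootsR.
  by rewrite maxElt; case: ifP.
- move=> y; apply: contraTN => py; rewrite -leNgt.
  by apply: le_bigmax_seq; rewrite ?mem_rootsR.
Qed.

Lemma roots_lt_or_root_ge p t : p != 0 -> roots_lt p t \/ exists2 s, t <= s & root p s.
Proof.
move=> p_neq0; have [/hasP[s] | no_root] := boolP (has (>= t) (rootsR p)).
  by rewrite mem_rootsR // => ps t_le_s; right; exists s.
left=> s t_le_s; apply: contraNN no_root => ps.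
by apply/hasP; exists s; rewrite ?mem_rootsR.
Qed.

End RealClosedPolynomials.

Lemma horner_char_poly (R : comNzRingType) n (A : 'M[R]_n) a :
  (char_poly A).[a] = \det (a%:M - A).
Proof.
rewrite horner_sum; apply: eq_bigr => s _.
rewrite hornerM horner_exp !hornerE; congr (_ * _).
rewrite (big_morph _ (fun p q => hornerM p q a) (hornerC 1 a)).
by apply: eq_bigr => i _; rewrite !mxE !(hornerE, hornerMn).
Qed.

Lemma det_block_schur (R : comUnitRingType) n (a : R) (b : 'rV[R]_n) (c : 'cV[R]_n)
    (D : 'M[R]_n) : D \in unitmx ->
  \det (block_mx a%:M b c D) = \det D * (a - (b *m invmx D *m c) 0 0).
Proof.
move=> D_unit.
have -> : block_mx a%:M b c D =
    block_mx 1%:M (b *m invmx D) 0 1%:M *m block_mx (a - (b *m invmx D *m c) 0 0)%:M 0 c D.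
  rewrite mulmx_block !mul1mx !mul0mx !add0r mulmxKV //.
  by congr block_mx; rewrite [X in _ = _ + X]mx11_scalar -raddfD /= subrK.
by rewrite det_mulmx det_ublock det_lblock !det1 det_scalar1 !mul1r mulrC.
Qed.

Lemma char_poly_trmx (R : comNzRingType) n (A : 'M[R]_n) : char_poly A^T = char_poly A.
Proof. by rewrite /char_poly /char_poly_mx -det_tr linearB /= tr_scalar_mx map_trmx trmxK. Qed.

Lemma root_char_poly_oppmx (R : comNzRingType) n (A : 'M[R]_n) x :
  root (char_poly (- A)) x = root (char_poly A) (- x).
Proof.
rewrite /root !horner_char_poly (raddfN (@scalar_mx _ n)) opprK -opprD -scaleN1r detZ.
by rewrite (mulrI_eq0 _ (@lreg_sign _ n)).
Qed.

Lemma char_poly_root_eigencol (F : fieldType) n (A : 'M[F]_n) a :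
  root (char_poly A) a -> exists2 w : 'cV[F]_n, w != 0 & A *m w = a *: w.
Proof.
rewrite -char_poly_trmx -eigenvalue_root_char => /eigenvalueP[v vA v_neq0].
exists v^T; first by rewrite trmx_eq0.
by rewrite -[A]trmxK -trmx_mul vA linearZ.
Qed.

Section NonnegMatrices.
Variable R : realDomainType.

Lemma nonneg_addmx m n (A B : 'M[R]_(m, n)) :
  nonneg_mx A -> nonneg_mx B -> nonneg_mx (A + B).
Proof. by move=> A_ge0 B_ge0 i j; rewrite mxE addr_ge0. Qed.

Lemma nonneg_mulmx m n p (A : 'M[R]_(m, n)) (B : 'M[R]_(n, p)) :
  nonneg_mx A -> nonneg_mx B -> nonneg_mx (A *m B).
Proof. by move=> A_ge0 B_ge0 i j; rewrite mxE sumr_ge0 // => k _; rewrite mulr_ge0. Qed.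

Lemma nonneg_col_mx m1 m2 n (A1 : 'M[R]_(m1, n)) (A2 : 'M[R]_(m2, n)) :
  nonneg_mx (col_mx A1 A2) <-> nonneg_mx A1 /\ nonneg_mx A2.
Proof.
split=> [A_ge0 | [A1_ge0 A2_ge0] i j].
  split=> i j; [have := A_ge0 (lshift m2 i) j | have := A_ge0 (rshift m1 i) j].
    by rewrite col_mxEu.
  by rewrite col_mxEd.
by rewrite -(splitK i); case: (split i) => k; rewrite ?col_mxEu ?col_mxEd.
Qed.

End NonnegMatrices.

Section MonotoneMatrices.
Variable R : rcfType.

Definition monotone_mx n (A : 'M[R]_n) :=
  forall x : 'cV[R]_n, nonneg_mx (A *m x) -> nonneg_mx x.

Lemma det_sub_gt0 n (A : 'M[R]_n) t : roots_lt (char_poly A) t -> 0 < \det (t%:M - A).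
Proof. by move=> A_roots; rewrite -horner_char_poly monic_roots_lt_gt0 ?char_poly_monic. Qed.

Lemma unitmx_sub n (A : 'M[R]_n) t : roots_lt (char_poly A) t -> t%:M - A \in unitmx.
Proof. by move=> /det_sub_gt0 det_gt0; rewrite unitmxE unitfE gt_eqF. Qed.

Lemma monotone_invmx_nonneg n (A : 'M[R]_n) (c : 'cV[R]_n) :
  monotone_mx A -> A \in unitmx -> nonneg_mx c -> nonneg_mx (invmx A *m c).
Proof. by move=> A_mono A_unit c_ge0; apply: A_mono; rewrite mulKVmx. Qed.

Section Block.
Variables (n : nat) (a : R) (b : 'rV[R]_n) (c : 'cV[R]_n) (N' : 'M[R]_n).
Hypotheses (b_ge0 : nonneg_mx b) (c_ge0 : nonneg_mx c).
Hypothesis N'_monotone : forall t, roots_lt (char_poly N') t -> monotone_mx (t%:M - N').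

Let N : 'M[R]_(1 + n) := block_mx a%:M b c N'.
Let schur t : R := (b *m invmx (t%:M - N') *m c) 0 0.

Lemma schur_ge0 t : roots_lt (char_poly N') t -> 0 <= schur t.
Proof.
move=> N'_roots; rewrite /schur -mulmxA.
have D_unit := unitmx_sub N'_roots.
exact: nonneg_mulmx b_ge0 (monotone_invmx_nonneg (N'_monotone N'_roots) D_unit c_ge0) 0 0.
Qed.

Lemma scalar_sub_block t :
  t%:M - N = block_mx (t - a)%:M (- b) (- c) (t%:M - N').
Proof. by rewrite (scalar_mx_block 1 n) opp_block_mx add_block_mx !sub0r -raddfB. Qed.

Lemma det_sub_block t : roots_lt (char_poly N') t ->
  \det (t%:M - N) = \det (t%:M - N') * (t - a - schur t).
Proof.
move=> N'_roots; rewrite scalar_sub_block det_block_schur ?unitmx_sub //.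
by rewrite !mulNmx mulmxN opprK.
Qed.

Lemma roots_lt_drsub t : roots_lt (char_poly N) t -> roots_lt (char_poly N') t.
Proof.
move=> N_roots s t_le_s; apply/negP => N's_root.
have [s0 [s_le_s0 N's0_root above_s0]] :=
  max_root (monic_neq0 (char_poly_monic N')) N's_root.
have N'_roots y : s0 < y -> roots_lt (char_poly N') y.
  by move=> s0_lt_y z /(lt_le_trans s0_lt_y); exact: above_s0.
(* Above the largest root s0 of char N', char N <= ('X - a) * char N' because the
   Schur complement is nonnegative there; by continuity char N (s0) <= 0. *)
pose q := char_poly N - ('X - a%:P) * char_poly N'.
have q_le0 y : s0 < y -> q.[y] <= 0.
  move=> /N'_roots N'y; rewrite !hornerE !horner_char_poly det_sub_block //.
  have d_gt0 := det_sub_gt0 N'y; have schur_y_ge0 := schur_ge0 N'y.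
  set d := \det _ in d_gt0 *.
  suff -> : d * (y - a - schur y) - (y - a) * d = - (d * schur y).
    by rewrite oppr_le0 mulr_ge0 // ltW.
  ring.
have := horner_le0_right q_le0.
rewrite hornerD hornerN hornerM (rootP N's0_root) mulr0 subr0.
move=> /(monic_root_ge (char_poly_monic N))[y s0_le_y N_y].
by have := N_roots y (le_trans t_le_s (le_trans s_le_s0 s0_le_y)); rewrite N_y.
Qed.

Lemma monotone_block t : roots_lt (char_poly N) t -> monotone_mx (t%:M - N).
Proof.
move=> N_roots; have N'_roots := roots_lt_drsub N_roots.
set D := t%:M - N'.
have D_unit : D \in unitmx := unitmx_sub N'_roots.
have D_mono : monotone_mx D := N'_monotone N'_roots.
have schur_gt0 : 0 < t - a - schur t.
  by have := det_sub_gt0 N_roots; rewrite det_sub_block // pmulr_rgt0 // det_sub_gt0.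
move=> x; rewrite -[x]vsubmxK scalar_sub_block mul_block_col -/D.
set x0 := usubmx x; set x' := dsubmx x.
set y0 := _ + _ *m x'; set y' := _ + D *m x'.
move=> /nonneg_col_mx[y0_ge0 y'_ge0].
have Dx' : D *m x' = y' + c *m x0 by rewrite /y' mulNmx addrC addNKr.
have x0E : (t - a - schur t) *: x0 = y0 + b *m (invmx D *m y').
  rewrite /y0 /y' !mulmxDr mulKmx // !mulmxA mulmxN !mulNmx [b *m _ *m c]mx11_scalar.
  by rewrite !mul_scalar_mx scalerBl addrACA addNr addr0.
have x0_ge0 : nonneg_mx x0.
  move=> i j; rewrite -(pmulr_rge0 _ schur_gt0).
  have := nonneg_addmx y0_ge0 (nonneg_mulmx b_ge0 (monotone_invmx_nonneg D_mono D_unit y'_ge0)).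
  by rewrite -x0E => /(_ i j); rewrite mxE.
have x'_ge0 : nonneg_mx x'.
  by apply: D_mono; rewrite Dx'; exact: nonneg_addmx y'_ge0 (nonneg_mulmx c_ge0 x0_ge0).
exact/nonneg_col_mx.
Qed.

End Block.

Lemma monotone_sub_nonneg n (N : 'M[R]_n) t :
  nonneg_mx N -> roots_lt (char_poly N) t -> monotone_mx (t%:M - N).
Proof.
elim: n N t => [|n IH] N t N_ge0; first by move=> _ x _ [].
have -> : N = block_mx (ulsubmx (N : 'M_(1 + n)) 0 0)%:M (ursubmx (N : 'M_(1 + n)))
    (dlsubmx (N : 'M_(1 + n))) (drsubmx (N : 'M_(1 + n))).
  by rewrite -mx11_scalar submxK.
apply: monotone_block => [i j|i j|t']; rewrite ?mxE //.
by apply: IH => i j; rewrite !mxE.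
Qed.

Lemma subinvariant_root_ge n (N : 'M[R]_n) (u : 'cV[R]_n) t :
  nonneg_mx N -> nonneg_mx u -> u != 0 -> nonneg_mx (N *m u - t *: u) ->
  exists2 mu, t <= mu & root (char_poly N) mu.
Proof.
move=> N_ge0 u_ge0 u_neq0 Nu_ge_tu.
have [N_roots|//] := roots_lt_or_root_ge t (monic_neq0 (char_poly_monic N)).
have := monotone_sub_nonneg N_ge0 N_roots (x := - u).
rewrite mulmxN mulmxBl mul_scalar_mx opprB => /(_ Nu_ge_tu) neg_u_ge0.
case/negP: u_neq0; apply/eqP/matrixP => i j; apply/eqP.
have := neg_u_ge0 i j; rewrite mxE oppr_ge0 => u_le0.
by rewrite mxE eq_le u_le0 u_ge0.
Qed.

End MonotoneMatrices.

Section SpectralRadius.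
Variable R : rcfType.

Lemma normc_RRe (z : R[i]) : `|z| = (complex.Re `|z|)%:C%C.
Proof. by rewrite RRe_real // normr_real. Qed.

Lemma normcR (a : R) : `|a%:C%C| = `|a|%:C%C.
Proof. by rewrite normc_def /= expr0n addr0 sqrtr_sqr. Qed.

Lemma spectral_radiusE n (A : 'M[R]_n) :
  spectral_radius A = \big[Num.max/0]_(z <- eigenvalues_C A) complex.Re `|z|.
Proof.
have max_morph : {morph real_complex R : x y / Num.max x y}.
  by move=> x y; rewrite !maxElt ltcR; case: ifP.
rewrite /spectral_radius (eq_bigr _ (fun z _ => normc_RRe z)).
by rewrite -(big_morph _ max_morph (erefl 0%:C%C)).
Qed.

Lemma mem_eigenvalues_C n (A : 'M[R]_n) z :
  (z \in eigenvalues_C A) = root (char_poly (map_mx (real_complex R) A)) z.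
Proof.
rewrite /eigenvalues_C; case: closed_field_poly_normal => r /= ->.
by rewrite rootZ ?root_prod_XsubC // (monicP (char_poly_monic _)) oner_neq0.
Qed.

Lemma root_char_poly_le_spectral_radius n (A : 'M[R]_n) (a : R) :
  root (char_poly A) a -> `|a| <= spectral_radius A.
Proof.
move=> Aa; rewrite spectral_radiusE.
have a_eig : a%:C%C \in eigenvalues_C A.
  by rewrite mem_eigenvalues_C -map_char_poly fmorph_root.
have -> : `|a| = complex.Re `|a%:C%C| by rewrite normcR.
exact: (@le_bigmax_seq _ _ _ _ 0 _ xpredT (fun z => complex.Re `|z|) a_eig).
Qed.

Lemma spectral_radius_attained n (A : 'M[R]_n) : spectral_radius A != 0 ->
  exists2 z, root (char_poly (map_mx (real_complex R) A)) z
           & complex.Re `|z| = spectral_radius A.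
Proof.
rewrite spectral_radiusE big_seq; elim/big_rec: _ => [|z r z_eig IH]; first by rewrite eqxx.
rewrite maxElt; case: ifP => _ // _.
by exists z; rewrite -?mem_eigenvalues_C.
Qed.

Lemma nonsingular_M_matrix_unitmx n (A : 'M[R]_n) : nonsingular_M_matrix A -> A \in unitmx.
Proof.
case=> _ [s [N [_ [-> rhoN_lt_s]]]].
rewrite unitmxE unitfE -horner_char_poly; apply: contraTneq rhoN_lt_s => /rootP Ns.
by rewrite -leNgt (le_trans (ler_norm s)) // root_char_poly_le_spectral_radius.
Qed.

Lemma eigen_norm_subinvariant n (A : 'M[R]_n) (z : R[i]) :
  root (char_poly (map_mx (real_complex R) A)) z ->
  exists u : 'cV[R]_n, [/\ u != 0, nonneg_mx u
    & nonneg_mx (map_mx Num.norm A *m u - complex.Re `|z| *: u)].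
Proof.
move=> /char_poly_root_eigencol[w w_neq0 Aw].
pose u : 'cV[R]_n := \col_i complex.Re `|w i 0|.
have uE i : (u i 0)%:C%C = `|w i 0| by rewrite mxE -normc_RRe.
exists u; split.
- apply: contraNneq w_neq0 => u0; apply/eqP/matrixP => i j; rewrite ord1.
  by apply/eqP; rewrite mxE -normr_eq0 -uE u0 mxE.
- by move=> i j; rewrite ord1 -lecR uE; exact: normr_ge0.
- move=> i j; rewrite ord1 !mxE subr_ge0 -lecR rmorphM rmorph_sum /= -!normc_RRe -normrM.
  have -> : z * w i 0 = \sum_k (A i k)%:C%C * w k 0.
    have := congr1 (fun M : 'cV_n => M i 0) Aw; rewrite !mxE => <-.
    by apply: eq_bigr => k _; rewrite mxE.
  apply: le_trans (ler_norm_sum _ _ _) _; apply: ler_sum => k _.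
  by rewrite normrM normcR mxE rmorphM /= uE.
Qed.

End SpectralRadius.

Theorem lemma3p2 (R : realType) (n : nat) (B C : 'M[R]_n) :
  nonsingular_M_matrix B ->
  M_matrix C ->
  nonneg_mx (invmx B *m C) ->
  nonsingular_M_matrix (B - C - 1%:M) ->
  forall X : 'M[R]_n,
    (forall i j, X i j <= 0) ->
    X *m X + B *m X + C = 0 ->
    spectral_radius X != 1.
Proof.
move=> _ _ _ /nonsingular_M_matrix_unitmx BC1_unit X X_le0 quadX; apply/eqP => rhoX1.
have [z Xz z_norm] : exists2 z, root (char_poly (map_mx (real_complex R) X)) z
    & complex.Re `|z| = spectral_radius X.
  by apply: spectral_radius_attained; rewrite rhoX1 oner_neq0.
have normX : map_mx Num.norm X = - X by apply/matrixP => i j; rewrite !mxE ler0_norm.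
have [u [u_neq0 u_ge0]] := eigen_norm_subinvariant Xz.
rewrite normX z_norm rhoX1 => Xu_ge_u.
have negX_ge0 : nonneg_mx (- X) by move=> i j; rewrite mxE oppr_ge0.
have [mu mu_ge1] := subinvariant_root_ge negX_ge0 u_ge0 u_neq0 Xu_ge_u.
rewrite root_char_poly_oppmx => X_mu.
have mu1 : mu = 1.
  have := root_char_poly_le_spectral_radius X_mu.
  rewrite normrN rhoX1 ger0_norm ?(le_trans ler01 mu_ge1) // => mu_le1.
  by apply/eqP; rewrite eq_le mu_le1.
rewrite mu1 in X_mu; have [w w_neq0] := char_poly_root_eigencol X_mu.
rewrite scaleN1r => Xw.
have BC1w : (B - C - 1%:M) *m w = 0.
  have := congr1 (mulmx^~ w) quadX; rewrite !mulmxDl -!mulmxA !Xw !mulmxN Xw opprK mul0mx.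
  move/eqP; rewrite -oppr_eq0 => /eqP <-.
  by rewrite !mulNmx mul1mx !opprD !opprK addrAC [- w + _]addrC.
by move: w_neq0; rewrite -(mulKmx BC1_unit w) BC1w mulmx0 eqxx.
Qed.
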